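(* (Craig's and Lyndon's interpolation.) For all formulas $\phi,\psi$ of $\mathbf{PL}(\mathbin{\backslash\!\!/})$: if $\phi\models\psi$, then there is a formula $\theta$ such that $\phi\models\theta$, $\theta\models\psi$, and $\mathsf{P}^i(\theta)\subseteq\mathsf{P}^i(\phi)\cap\mathsf{P}^i(\psi)$ for each $i\in\{+,-\}$.
   Context: Fix a countably infinite set $\mathsf{Prop}$ of propositional variables. Classical formulas are generated by $\alpha ::= p \mid \bot \mid \neg\alpha \mid \alpha\wedge\alpha \mid \alpha\vee\alpha$ with $p\in\mathsf{Prop}$. Formulas of $\mathbf{PL}(\mathbin{\backslash\!\!/})$ are generated by $\phi ::= \alpha \mid \phi\wedge\phi \mid \phi\vee\phi \mid \phi\mathbin{\backslash\!\!/}\phi$ where $\alpha$ is classical. A team with domain $X\subseteq\mathsf{Prop}$ is a set $t\subseteq 2^X$ of valuations. For a team $t$ whose domain contains the variables of the formula: $t\models p$ iff $v(p)=1$ for all $v\in t$; $t\models\bot$ iff $t=\emptyset$; $t\models\neg\alpha$ iff $\{v\}\not\models\alpha$ for all $v\in t$; $t\models\phi\wedge\psi$ iff both hold; $t\models\phi\vee\psi$ iff there are $s,u\subseteq t$ with $t=s\cup u$, $s\models\phi$, $u\models\psi$; $t\models\phi\mathbin{\backslash\!\!/}\psi$ iff $t\models\phi$ or $t\models\psi$. $\phi\models\psi$ means every team satisfying $\phi$ satisfies $\psi$. Polarity: an occurrence of a propositional variable in $\phi$ is positive (negative) if it lies in the scope of an even (odd) number of negations; $\mathsf{P}^+(\phi)$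 ($\mathsf{P}^-(\phi)$) is the set of variables with a positive (negative) occurrence in $\phi$. *)

Inductive cform : Type :=
| CVar : nat -> cform
| CBot : cform
| CNeg : cform -> cform
| CAnd : cform -> cform -> cform
| COr  : cform -> cform -> cform.

Inductive form : Type :=
| FCl   : cform -> form
| FAnd  : form -> form -> form
| FOr   : form -> form -> form
| FGor  : form -> form -> form.

(* A valuation on a domain X ⊆ nat is represented canonically by a total
   function nat -> bool that is false outside X; a team is a set of such. *)
Definition valuation := nat -> bool.
Definition team := valuation -> Prop.

Definition team_on (X : nat -> Prop) (t : team) : Prop :=
  forall v, t v -> forall p, ~ X p -> v p = false.

Definition team_split (t s u : team) : Prop :=
  forall v, t v <-> (s v \/ u v).

Fixpoint csat (t : team) (a : cform) : Prop :=
  match a with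
  | CVar p => forall v, t v -> v p = true
  | CBot => forall v, ~ t v
  | CNeg b => forall v, t v -> ~ csat (fun w => w = v) b
  | CAnd b c => csat t b /\ csat t c
  | COr b c => exists s u, team_split t s u /\ csat s b /\ csat u c
  end.

Fixpoint sat (t : team) (f : form) : Prop :=
  match f with
  | FCl a => csat t a
  | FAnd g h => sat t g /\ sat t h
  | FOr g h => exists s u, team_split t s u /\ sat s g /\ sat u h
  | FGor g h => sat t g \/ sat t h
  end.

Fixpoint cpol (a : cform) (p : nat) (b : bool) : Prop :=
  match a with
  | CVar q => p = q /\ b = true
  | CBot => False
  | CNeg c => cpol c p (negb b)
  | CAnd c d => cpol c p b \/ cpol d p b
  | COr c d => cpol c p b \/ cpol d p b
  end.

Fixpoint pol (f : form) (p : nat) (b : bool) : Prop :=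
  match f with
  | FCl a => cpol a p b
  | FAnd g h | FOr g h | FGor g h => pol g p b \/ pol h p b
  end.

Definition Ppos (f : form) (p : nat) : Prop := pol f p true.
Definition Pneg (f : form) (p : nat) : Prop := pol f p false.

Definition vars (f : form) (p : nat) : Prop := Ppos f p \/ Pneg f p.

Definition entails (f g : form) : Prop :=
  forall (X : nat -> Prop) (t : team),
    (forall p, vars f p -> X p) -> (forall p, vars g p -> X p) ->
    team_on X t -> sat t f -> sat t g.

(* Classical formulas are flat: a team satisfies a classical formula iff each
   of its valuations does.  Distributing the tensor and the conjunction over
   the global disjunction turns every formula into a global disjunction of
   classical formulas without creating new polarities, and [phi |= psi] then
   says that each disjunct [a] of [phi] classically entails some disjunct [b]
   of [psi] (test it on the team of all models of [a]).  The global
   disjunction of classical Lyndon interpolants of these pairs is [theta].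
   Classical Lyndon interpolation removes, one at a time, each polarity
   [(p, s)] that [a] has and [b] lacks: if [b] has no positive occurrence of
   [p], then [a |= a[T/p] \/ (a[F/p] /\ ~p) |= b], and [a |= a[T/p]] already
   when [a] has no negative occurrence of [p]. *)

From Stdlib Require Import List Bool Arith Classical.
Import ListNotations.

Fixpoint eval (v : valuation) (a : cform) : bool :=
  match a with
  | CVar p => v p
  | CBot => false
  | CNeg b => negb (eval v b)
  | CAnd b c => eval v b && eval v c
  | COr b c => eval v b || eval v c
  end.

Definition centails (a b : cform) : Prop :=
  forall v, eval v a = true -> eval v b = true.

Lemma centails_refl a : centails a a.
Proof. intros v Hv; exact Hv. Qed.

Lemma centails_trans a b c : centails a b -> centails b c -> centails a c.
Proof. intros Hab Hbc v Hv; auto. Qed.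

Lemma csat_eval a : forall t, csat t a <-> forall v, t v -> eval v a = true.
Proof.
  induction a as [p| |b IH|b IHb c IHc|b IHb c IHc]; intros t; simpl.
  - tauto.
  - split; intros H v Hv; [exfalso; exact (H v Hv) | discriminate (H v Hv)].
  - split; intros H v Hv; specialize (H v Hv).
    + destruct (eval v b) eqn:E; [|reflexivity].
      exfalso; apply H, IH; intros w ->; exact E.
    + intros Hb. rewrite (proj1 (IH _) Hb v eq_refl) in H; discriminate.
  - rewrite IHb, IHc. split.
    + intros [H1 H2] v Hv. rewrite H1, H2; auto.
    + intros H; split; intros v Hv; specialize (H v Hv); apply andb_true_iff in H; tauto.
  - split.
    + intros [s [u [Hs [H1 H2]]]] v Hv. rewrite IHb in H1. rewrite IHc in H2.
      apply orb_true_iff. apply Hs in Hv as [Hv|Hv]; auto.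
    + intros H.
      exists (fun v => t v /\ eval v b = true), (fun v => t v /\ eval v c = true).
      split; [|split; [apply IHb | apply IHc]; intros v [_ E]; exact E].
      intros v; split; [|intros [[Hv _]|[Hv _]]; exact Hv].
      intros Hv. specialize (H v Hv). apply orb_true_iff in H. tauto.
Qed.

Lemma csat_centails a b t : centails a b -> csat t a -> csat t b.
Proof. rewrite !csat_eval. intros Hab Ha v Hv; auto. Qed.

(* Negation swaps the roles of the two valuations, so the hypotheses are
   stated symmetrically. *)
Lemma eval_mono a : forall v w,
  (forall p, cpol a p true -> v p = true -> w p = true) ->
  (forall p, cpol a p false -> w p = true -> v p = true) ->
  eval v a = true -> eval w a = true.
Proof.
  induction a as [q| |b IH|b IHb c IHc|b IHb c IHc]; intros v w Hpos Hneg; simpl in *.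
  - apply Hpos; auto.
  - auto.
  - destruct (eval w b) eqn:E; [|reflexivity].
    rewrite (IH w v); auto.
  - rewrite !andb_true_iff. intros [H1 H2]. split; [apply (IHb v) | apply (IHc v)]; auto.
  - rewrite !orb_true_iff. intros [H|H]; [left; apply (IHb v) | right; apply (IHc v)]; auto.
Qed.

Definition upd (v : valuation) (p : nat) (c : bool) : valuation :=
  fun q => if Nat.eqb q p then c else v q.

Lemma eval_upd_mono a p c v :
  ~ cpol a p (negb c) -> eval v a = true -> eval (upd v p c) a = true.
Proof.
  intros Hn. apply eval_mono; intros q Hq; unfold upd;
    destruct (Nat.eqb_spec q p); subst; destruct c; simpl in *; tauto || discriminate.
Qed.

Lemma eval_upd_mono_rev a p c v :
  ~ cpol a p c -> eval (upd v p c) a = true -> eval v a = true.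
Proof.
  intros Hn. apply eval_mono; intros q Hq; unfold upd;
    destruct (Nat.eqb_spec q p); subst; destruct c, (v p); simpl in *; tauto.
Qed.

Definition cconst (c : bool) : cform := if c then CNeg CBot else CBot.

Fixpoint csubst (a : cform) (p : nat) (c : bool) : cform :=
  match a with
  | CVar q => if Nat.eqb q p then cconst c else CVar q
  | CBot => CBot
  | CNeg b => CNeg (csubst b p c)
  | CAnd b d => CAnd (csubst b p c) (csubst d p c)
  | COr b d => COr (csubst b p c) (csubst d p c)
  end.

Lemma eval_subst a p c v : eval v (csubst a p c) = eval (upd v p c) a.
Proof.
  induction a; simpl; try rewrite IHa; try rewrite IHa1, IHa2; auto.
  unfold upd. destruct (Nat.eqb n p), c; reflexivity.
Qed.

Lemma eval_subst_self a p v : eval v (csubst a p (v p)) = eval v a.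
Proof.
  induction a; simpl; try rewrite IHa; try rewrite IHa1, IHa2; auto.
  destruct (Nat.eqb_spec n p); subst; [destruct (v p)|]; reflexivity.
Qed.

Lemma cpol_subst a p c q r : cpol (csubst a p c) q r -> cpol a q r /\ q <> p.
Proof.
  revert r; induction a; intros r; simpl; try tauto.
  - destruct (Nat.eqb_spec n p); [destruct c; simpl; tauto|].
    simpl. intros [-> ->]; auto.
  - apply IHa.
  - intros [H|H]; [apply IHa1 in H | apply IHa2 in H]; tauto.
  - intros [H|H]; [apply IHa1 in H | apply IHa2 in H]; tauto.
Qed.

Definition lit (p : nat) (c : bool) : cform := if c then CVar p else CNeg (CVar p).

Lemma eval_lit p c v : eval v (lit p c) = eqb (v p) c.
Proof. destruct c; simpl; destruct (v p); reflexivity. Qed.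

Lemma cpol_lit p c q r : cpol (lit p c) q r -> q = p /\ r = c.
Proof. destruct c, r; simpl; intuition discriminate. Qed.

Lemma centails_subst a b p s :
  ~ cpol b p s -> centails a b -> centails (csubst a p s) b.
Proof.
  intros Hn Hab v Hv. rewrite eval_subst in Hv.
  apply (eval_upd_mono_rev b p s); auto.
Qed.

Lemma drop_polarity a b p s : centails a b -> ~ cpol b p s ->
  exists a', centails a a' /\ centails a' b /\
             (forall q r, cpol a' q r -> cpol a q r) /\ ~ cpol a' p s.
Proof.
  intros Hab Hn.
  destruct (classic (cpol a p (negb s))) as [Hneg|Hneg].
  - exists (COr (csubst a p s) (CAnd (csubst a p (negb s)) (lit p (negb s)))).
    split; [|split; [|split]].
    + intros v Hv; simpl. rewrite eval_lit.
      destruct (bool_dec (v p) s) as [Hvp|Hvp].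
      * rewrite <- Hvp, eval_subst_self, Hv. reflexivity.
      * assert (Hvp' : v p = negb s) by (revert Hvp; destruct (v p), s; simpl; congruence).
        rewrite <- Hvp', eval_subst_self, Hv, eqb_reflx, orb_true_r. reflexivity.
    + intros v Hv; simpl in Hv. apply orb_true_iff in Hv as [Hv|Hv].
      * exact (centails_subst a b p s Hn Hab v Hv).
      * apply andb_true_iff in Hv as [Hv Hl]. rewrite eval_lit in Hl.
        apply eqb_prop in Hl. rewrite <- Hl, eval_subst_self in Hv; auto.
    + intros q r [H|[H|H]]; [apply cpol_subst in H .. | apply cpol_lit in H as [-> ->]]; tauto.
    + intros [H|[H|H]]; [apply cpol_subst in H; tauto .. |].
      apply cpol_lit in H as [_ Hs]. destruct s; discriminate.
  - exists (csubst a p s). split; [|split; [|split]].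
    + intros v Hv. rewrite eval_subst. apply eval_upd_mono; auto.
    + apply centails_subst; auto.
    + intros q r H. apply cpol_subst in H; tauto.
    + intros H. apply cpol_subst in H; tauto.
Qed.

Lemma restrict_polarities (L : list (nat * bool)) : forall a b, centails a b ->
  exists a', centails a a' /\ centails a' b /\
             (forall q r, cpol a' q r -> cpol a q r) /\
             (forall q r, In (q, r) L -> cpol a' q r -> cpol b q r).
Proof.
  induction L as [|[p s] L IH]; intros a b Hab.
  - exists a. repeat split; [apply centails_refl | exact Hab | auto | intros q r []].
  - destruct (classic (cpol b p s)) as [Hb|Hb].
    + destruct (IH a b Hab) as [a' (Haa' & Ha'b & Hpol & HL)].
      exists a'. repeat split; auto. intros q r [[= <- <-]|Hq]; auto.
    + destruct (drop_polarity a b p s Hab Hb) as [a1 (Haa1 & Ha1b & Hpol1 & Hps)].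
      destruct (IH a1 b Ha1b) as [a' (Ha1a' & Ha'b & Hpol & HL)].
      exists a'. repeat split; [apply (centails_trans a a1 a'); auto | auto | auto |].
      intros q r [[= <- <-]|Hq] Hqr; [exfalso|]; auto.
Qed.

Fixpoint cvars (a : cform) : list nat :=
  match a with
  | CVar p => [p]
  | CBot => []
  | CNeg b => cvars b
  | CAnd b c | COr b c => cvars b ++ cvars c
  end.

Lemma cpol_cvars a q r : cpol a q r -> In q (cvars a).
Proof.
  revert r; induction a; intros r; simpl; try tauto.
  - intros [-> _]; auto.
  - apply IHa.
  - intros [H|H]; apply in_or_app; eauto.
  - intros [H|H]; apply in_or_app; eauto.
Qed.

Lemma classical_lyndon a b : centails a b ->
  exists g, centails a g /\ centails g b /\
            (forall q r, cpol g q r -> cpol a q r /\ cpol b q r).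
Proof.
  intros Hab.
  destruct (restrict_polarities (list_prod (cvars a) [true; false]) a b Hab)
    as [g (Hag & Hgb & Hpol & HL)].
  exists g. split; [exact Hag | split; [exact Hgb |]].
  intros q r Hg. split; [exact (Hpol q r Hg) |].
  apply HL; [|exact Hg].
  apply in_prod; [exact (cpol_cvars a q r (Hpol q r Hg)) | destruct r; simpl; auto].
Qed.

Lemma sat_empty_team f t : (forall v, ~ t v) -> sat t f.
Proof.
  revert t; induction f as [a|f IHf g IHg|f IHf g IHg|f IHf g IHg]; intros t Ht; simpl.
  - apply csat_eval. intros v Hv; exfalso; exact (Ht v Hv).
  - auto.
  - exists t, t. split; auto. intros v; tauto.
  - auto.
Qed.

Lemma entails_sat f g t : entails f g -> sat t f -> sat t g.
Proof.
  intros Hfg. apply (Hfg (fun _ => True)); auto.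
  intros v _ p Hp; exfalso; exact (Hp I).
Qed.

Definition cprod (op : cform -> cform -> cform) (A B : list cform) : list cform :=
  map (fun ab => op (fst ab) (snd ab)) (list_prod A B).

Lemma in_cprod op A B c :
  In c (cprod op A B) <-> exists a b, In a A /\ In b B /\ c = op a b.
Proof.
  unfold cprod. rewrite in_map_iff. split.
  - intros [[a b] [<- Hab]]. apply in_prod_iff in Hab. exists a, b; tauto.
  - intros (a & b & Ha & Hb & ->). exists (a, b). split; auto. apply in_prod; auto.
Qed.

Fixpoint cdisjuncts (f : form) : list cform :=
  match f with
  | FCl a => [a]
  | FAnd g h => cprod CAnd (cdisjuncts g) (cdisjuncts h)
  | FOr g h => cprod COr (cdisjuncts g) (cdisjuncts h)
  | FGor g h => cdisjuncts g ++ cdisjuncts h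
  end.

Lemma sat_cdisjuncts f : forall t,
  sat t f <-> exists a, In a (cdisjuncts f) /\ csat t a.
Proof.
  induction f as [a|f IHf g IHg|f IHf g IHg|f IHf g IHg]; intros t; simpl.
  - split; [intros H; exists a; auto | intros (a' & [<-|[]] & H); exact H].
  - setoid_rewrite in_cprod. rewrite IHf, IHg. split.
    + intros [(a & Ha & Hta) (b & Hb & Htb)]. exists (CAnd a b). split; [eauto 6|split; auto].
    + intros (c & (a & b & Ha & Hb & ->) & Hta & Htb). split; eauto.
  - setoid_rewrite in_cprod. split.
    + intros (s & u & Hsplit & Hs & Hu). apply IHf in Hs as (a & Ha & Hsa).
      apply IHg in Hu as (b & Hb & Hub). exists (COr a b). split; [eauto 6|].
      exists s, u; auto.
    + intros (c & (a & b & Ha & Hb & ->) & s & u & Hsplit & Hsa & Hub).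
      exists s, u. split; [exact Hsplit|split; [apply IHf | apply IHg]; eauto].
  - rewrite IHf, IHg. setoid_rewrite in_app_iff. firstorder.
Qed.

Lemma cpol_cdisjuncts f a p s : In a (cdisjuncts f) -> cpol a p s -> pol f p s.
Proof.
  revert a; induction f as [a0|f IHf g IHg|f IHf g IHg|f IHf g IHg]; intros a Ha Hp; simpl in *.
  - destruct Ha as [<-|[]]; exact Hp.
  - apply in_cprod in Ha as (b & c & Hb & Hc & ->). destruct Hp; eauto.
  - apply in_cprod in Ha as (b & c & Hb & Hc & ->). destruct Hp; eauto.
  - apply in_app_or in Ha as [Ha|Ha]; eauto.
Qed.

Lemma centails_cdisjunct f g a : entails f g -> In a (cdisjuncts f) ->
  exists b, In b (cdisjuncts g) /\ centails a b.
Proof.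
  intros Hfg Ha.
  assert (Hmodels : sat (fun v => eval v a = true) f).
  { apply sat_cdisjuncts. exists a. split; [exact Ha | apply csat_eval; auto]. }
  apply (entails_sat f g _ Hfg), sat_cdisjuncts in Hmodels as (b & Hb & Htb).
  exists b. split; [exact Hb | exact (proj1 (csat_eval b _) Htb)].
Qed.

Fixpoint gdisj (G : list cform) : form :=
  match G with
  | [] => FCl CBot
  | g :: G' => FGor (FCl g) (gdisj G')
  end.

Lemma sat_gdisj G t :
  sat t (gdisj G) <-> (exists g, In g G /\ csat t g) \/ (forall v, ~ t v).
Proof.
  induction G as [|g G IH]; simpl.
  - firstorder.
  - rewrite IH. firstorder congruence.
Qed.

Lemma pol_gdisj G p s : pol (gdisj G) p s -> exists g, In g G /\ cpol g p s.
Proof.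
  induction G as [|g G IH]; simpl; [tauto|].
  intros [H|H]; [eauto|]. destruct (IH H) as (g' & Hg' & Hp); eauto.
Qed.

Lemma disjunctive_lyndon (A B : list cform) :
  (forall a, In a A -> exists b, In b B /\ centails a b) ->
  exists G, (forall a, In a A -> exists g, In g G /\ centails a g) /\
    forall g, In g G -> (exists b, In b B /\ centails g b) /\
      forall q r, cpol g q r ->
        (exists a, In a A /\ cpol a q r) /\ (exists b, In b B /\ cpol b q r).
Proof.
  induction A as [|a A IH]; intros HAB.
  - exists []. split; [intros a []|intros g []].
  - destruct (HAB a (or_introl eq_refl)) as (b & Hb & Hab).
    destruct (classical_lyndon a b Hab) as (g & Hag & Hgb & Hpol).
    destruct IH as (G & HAG & HGB); [intros a' Ha'; apply HAB; right; exact Ha'|].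
    exists (g :: G). split.
    + intros a' [<-|Ha']; [exists g; simpl; auto|].
      destruct (HAG a' Ha') as (g' & Hg' & Ha'g'). exists g'; simpl; auto.
    + intros g' [<-|Hg'].
      * split; [exists b; auto|]. intros q r Hq. destruct (Hpol q r Hq) as [Haq Hbq].
        split; [exists a | exists b]; simpl; auto.
      * destruct (HGB g' Hg') as [Hg'B Hg'pol]. split; [exact Hg'B|].
        intros q r Hq. destruct (Hg'pol q r Hq) as [(a' & Ha' & Ha'q) HBq].
        split; [exists a'; simpl; auto | exact HBq].
Qed.

Theorem corollary8p2 : forall phi psi : form,
  entails phi psi ->
  exists theta : form,
    entails phi theta /\ entails theta psi /\
    (forall p, Ppos theta p -> Ppos phi p /\ Ppos psi p) /\
    (forall p, Pneg theta p -> Pneg phi p /\ Pneg psi p).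
Proof.
  intros phi psi Hent.
  destruct (disjunctive_lyndon (cdisjuncts phi) (cdisjuncts psi)) as (G & HAG & HGB).
  { intros a Ha. exact (centails_cdisjunct phi psi a Hent Ha). }
  exists (gdisj G). split; [|split; [|split]].
  - intros X t _ _ _ Ht. apply sat_gdisj. left.
    apply sat_cdisjuncts in Ht as (a & Ha & Hta).
    destruct (HAG a Ha) as (g & Hg & Hag). exists g. split; [exact Hg|].
    exact (csat_centails a g t Hag Hta).
  - intros X t _ _ _ Ht. apply sat_gdisj in Ht as [(g & Hg & Htg)|Hempty].
    + destruct (HGB g Hg) as [(b & Hb & Hgb) _]. apply sat_cdisjuncts.
      exists b. split; [exact Hb|]. exact (csat_centails g b t Hgb Htg).
    + apply sat_empty_team, Hempty.
  - intros p Hp. destruct (pol_gdisj G p true Hp) as (g & Hg & Hgp).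
    destruct (proj2 (HGB g Hg) p true Hgp) as [(a & Ha & Hap) (b & Hb & Hbp)].
    split; eapply cpol_cdisjuncts; eauto.
  - intros p Hp. destruct (pol_gdisj G p false Hp) as (g & Hg & Hgp).
    destruct (proj2 (HGB g Hg) p false Hgp) as [(a & Ha & Hap) (b & Hb & Hbp)].
    split; eapply cpol_cdisjuncts; eauto.
Qed.
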